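(* Let $c\neq o$ be vertices, and let $\pi^1,\dots,\pi^{P}$ be all the distinct directed paths from $c$ to $o$. For each $k$, let $\bar L^k$ be the principal submatrix of $L$ obtained by deleting the rows and columns indexed by the vertices of $\pi^k$. Then $$e_o^T\operatorname{adj}(sI+L)e_c=\sum_{k=1}^{P}\vartheta(\pi^k)\,\det\big(sI+\bar L^k\big),$$ where the identity matrix in each term has the size of $\bar L^k$, and the determinant of an empty matrix is $1$.
   Context: $\mathcal G$ is a weighted directed graph on $\{1,\dots,N\}$ with adjacency matrix $A=[a_{ij}]$. Here $a_{ij}>0$ if there is an arc from $j$ to $i$, of weight $a_{ij}$, and $a_{ij}=0$ otherwise (no self-loops). The Laplacian is $L=D-A$ with $D=\mathrm{diag}(\sum_j a_{ij})$. A directed path from $u$ to $w$ is a sequence of pairwise distinct vertices $u=v_0,\dots,v_\ell=w$ with an arc from $v_k$ to $v_{k+1}$ for each $k$. Its weight $\vartheta(\pi)$ is the product of its arc weights. $e_i$ is the $i$-th canonical basis vector, and $\operatorname{adj}$ denotes the adjugate matrix. *)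

From HB Require Import structures.
From mathcomp Require Import all_boot all_order all_algebra.
Set Implicit Arguments. Unset Strict Implicit. Unset Printing Implicit Defensive.
Import Order.TTheory GRing.Theory Num.Theory.
Local Open Scope ring_scope.

(* Convention: A i j > 0 iff there is an arc from j to i, of weight A i j. *)

Definition laplacian (R : pzRingType) (N : nat) (A : 'M[R]_N) : 'M[R]_N :=
  \matrix_(i, j) ((i == j)%:R * \sum_(k < N) A i k) - A.

Definition arc (R : numDomainType) (N : nat) (A : 'M[R]_N) : rel 'I_N :=
  fun u v => 0 < A v u.

Definition is_dpath (R : numDomainType) (N : nat) (A : 'M[R]_N)
    (c o : 'I_N) (q : seq 'I_N) : bool :=
  [&& path (arc A) c q, uniq (c :: q) & last c q == o].

Definition path_weight (R : pzRingType) (N : nat) (A : 'M[R]_N)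
    (c : 'I_N) (q : seq 'I_N) : R :=
  \prod_(x <- zip q (c :: q)) A x.1 x.2.

Definition del_submx (R : Type) (N : nat) (M : 'M[R]_N) (S : {set 'I_N})
  : 'M[R]_#|~: S| :=
  \matrix_(i, j) M (enum_val i) (enum_val j).

From Pilot Require Import Defs.
From HB Require Import structures.
From mathcomp Require Import all_boot all_order all_algebra.
From mathcomp Require Import perm.
Set Implicit Arguments. Unset Strict Implicit. Unset Printing Implicit Defensive.
Import Order.TTheory GRing.Theory Num.Theory.
Local Open Scope ring_scope.

(* adj(B)_{oc} is the determinant of B with row c replaced by the unit row e_o.
   Expanding that determinant along column c, the term of row y is
   -B_{yc} times a cofactor which, after swapping rows c and y, is again a
   determinant of the same shape: c is deleted from B (its row and column are
   replaced by those of the identity) and y has taken the place of c.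
   Iterating walks along a simple path from c until it reaches o, where the
   remaining determinant is that of B with the path deleted; this identity
   holds for any square matrix over a commutative ring.  For B = sI + L the
   coefficients -B_{yx} = a_{yx} (y <> x) multiply up to the path weight,
   which vanishes unless every step is an arc. *)

Lemma path_weight_cons (R : pzRingType) N (A : 'M[R]_N) x y q :
  path_weight A x (y :: q) = A y x * path_weight A y q.
Proof. by rewrite /path_weight /= big_cons. Qed.

Lemma big_tuple_cons (R : nmodType) (T : finType) n (F : n.+1.-tuple T -> R) :
  \sum_(t : n.+1.-tuple T) F t = \sum_(x : T) \sum_(t : n.-tuple T) F [tuple of x :: t].
Proof.
rewrite pair_bigA (reindex (fun p : T * n.-tuple T => [tuple of p.1 :: p.2])) //=.
exists (fun t : n.+1.-tuple T => (thead t, [tuple of behead t])).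
  by case=> x t _; congr (_, _); apply: val_inj.
by move=> t _; rewrite [in RHS](tuple_eta t).
Qed.

Lemma big_tuple0 (R : nmodType) (T : finType) (F : 0.-tuple T -> R) :
  \sum_(t : 0.-tuple T) F t = F [tuple].
Proof. by rewrite (big_pred1 [tuple]) // => t; rewrite (tuple0 t); apply/esym/eqP. Qed.

Lemma cardsC_setU1 (T : finType) (S : {set T}) x :
  x \notin S -> #|~: S| = #|~: (x |: S)|.+1.
Proof.
move=> xS; rewrite (cardsD1 x (~: S)) inE xS add1n.
by rewrite setDE setCU setIC.
Qed.

Section CofactorExpansion.
Variables (R : comNzRingType) (N : nat).
Implicit Types (C D G H : 'M[R]_N) (S : {set 'I_N}).

Definition set_unit_row (x o : 'I_N) C : 'M[R]_N :=
  \matrix_(i, j) if i == x then (j == o)%:R else C i j.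

Lemma eq_cofactor C D i j :
  (forall a b, a != i -> b != j -> C a b = D a b) ->
  cofactor C i j = cofactor D i j.
Proof.
move=> eqCD; rewrite /cofactor; congr (_ * \det _); apply/matrixP => a b.
by rewrite !mxE eqCD // eq_sym neq_lift.
Qed.

Lemma cofactor_unit_row C x o : cofactor C x o = \det (set_unit_row x o C).
Proof.
rewrite (expand_det_row _ x) (bigD1 o) //= big1 => [|j /negPf ne_jo].
  rewrite mxE !eqxx mul1r addr0; apply: eq_cofactor => a b /negPf ne_ax _.
  by rewrite mxE ne_ax.
by rewrite mxE eqxx ne_jo mul0r.
Qed.

Lemma det_row_eq0 C y : (forall j, C y j = 0) -> \det C = 0.
Proof.
by move=> Cy0; rewrite (expand_det_row _ y) big1 // => j _; rewrite Cy0 mul0r.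
Qed.

Lemma det_xrow C x y : x != y -> \det (xrow x y C) = - \det C.
Proof.
by move=> ne_xy; rewrite xrowE det_mulmx det_perm odd_tperm ne_xy expr1 mulN1r.
Qed.

Lemma det_split_col C G H x :
  (forall i j, j != x -> C i j = G i j) ->
  (forall i j, j != x -> C i j = H i j) ->
  (forall i, C i x = G i x + H i x) -> \det C = \det G + \det H.
Proof.
move=> eqCG eqCH Cx; rewrite !(expand_det_col _ x) -big_split.
apply: eq_bigr => i _; rewrite Cx mulrDl.
by congr (_ * _ + _ * _); apply: eq_cofactor => a b _ ne_bx; [rewrite eqCG | rewrite eqCH].
Qed.

Variable B : 'M[R]_N.

(* A stand-in for the deletion of S that keeps the size of B (see det_id_pad). *)
Definition id_pad S : 'M[R]_N :=
  \matrix_(i, j) if (i \in S) || (j \in S) then (i == j)%:R else B i j.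

Lemma id_pad_set0 : id_pad set0 = B.
Proof. by apply/matrixP => i j; rewrite !mxE !inE. Qed.

Lemma det_unit_row_diag S o :
  \det (set_unit_row o o (id_pad S)) = \det (id_pad (o |: S)).
Proof.
rewrite -cofactor_unit_row (@eq_cofactor _ (id_pad (o |: S))); last first.
  by move=> a b /negPf ne_ao /negPf ne_bo; rewrite !mxE !inE ne_ao ne_bo.
rewrite cofactor_unit_row; congr (\det _); apply/matrixP => i j.
by rewrite !mxE !inE; case: eqP => [->|//]; rewrite /= eq_sym.
Qed.

(* Once rows x and y of the right-hand matrix are swapped, it differs from the
   left-hand one only in column x, by multiples of the common row y = e_x. *)
Lemma det_unit_row_swap S o x y :
  x \notin S -> x != o -> y \notin x |: S ->
  \det (set_unit_row y x (set_unit_row x o (id_pad S))) =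
  - \det (set_unit_row y o (id_pad (x |: S))).
Proof.
move=> xS ne_xo; rewrite !inE negb_or => /andP [ne_yx yS].
have ne_xy : x != y by rewrite eq_sym.
set C := set_unit_row y x _; set E := set_unit_row y o _.
rewrite -(det_xrow E ne_xy); set G := xrow x y E.
pose H := \matrix_(i, j) if j == x then C i x - G i x else C i j.
have GE i j : G i j = E (tperm x y i) j by rewrite mxE.
have detH0 : \det H = 0.
  apply: (@det_row_eq0 _ y) => j; rewrite !mxE; case: ifP => [_|/negbT ne_jx].
    by rewrite tpermR !eqxx (negPf ne_xy) !inE eqxx subrr.
  by rewrite !eqxx (negPf ne_jx).
rewrite (@det_split_col C G H x) ?detH0 ?addr0 // => [i j ne_jx|i j ne_jx|i].
- rewrite GE !mxE !inE; case: tpermP => [->|->|/eqP ne_ix /eqP ne_iy].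
  + by rewrite (negPf ne_xy) !eqxx.
  + by rewrite !eqxx (negPf ne_xy) /= eq_sym.
  + by rewrite (negPf ne_ix) (negPf ne_iy) (negPf ne_jx).
- by rewrite [in RHS]mxE (negPf ne_jx).
- by rewrite [in X in _ + X]mxE eqxx addrC subrK.
Qed.

Lemma det_unit_row_expand S o x : x \notin S -> x != o ->
  \det (set_unit_row x o (id_pad S)) =
  \sum_y (if y \in x |: S then 0
          else - B y x * \det (set_unit_row y o (id_pad (x |: S)))).
Proof.
move=> xS ne_xo; rewrite (expand_det_col _ x); apply: eq_bigr => y _.
have [|yxS] := ifPn; last first.
  have [ne_yx yS] : y != x /\ y \notin S by move: yxS; rewrite !inE negb_or => /andP.
  rewrite cofactor_unit_row det_unit_row_swap // !mxE (negPf ne_yx) (negPf yS).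
  by rewrite (negPf xS) mulrN mulNr.
rewrite !inE !mxE => /orP [/eqP ->|yS]; first by rewrite eqxx (negPf ne_xo) mul0r.
have ne_yx : y != x by apply: contraNneq xS => <-.
by rewrite (negPf ne_yx) yS mul0r.
Qed.

Variable o : 'I_N.

Definition avoiding_route S x (q : seq 'I_N) : bool :=
  [&& uniq (x :: q), last x q == o & all (fun v => v \notin S) (x :: q)].

Lemma avoiding_route_cons S x y t : x \notin S ->
  avoiding_route S x (y :: t) = (y \notin x |: S) && avoiding_route (x |: S) y t.
Proof.
move=> xS; have avoid_xS s : all (fun v => v \notin x |: S) s =
                             (x \notin s) && all (fun v => v \notin S) s.
  by elim: s => //= a s ->; rewrite !inE !negb_or eq_sym;
     case: (x == a); case: (x \in s); rewrite /= ?andbF.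
rewrite /avoiding_route avoid_xS /= !inE negb_or xS.
by rewrite [y == x]eq_sym; case: (x == y); case: (x \in t); case: (y \in S);
   rewrite /= ?andbF.
Qed.

Definition path_term S x (q : seq 'I_N) : R :=
  if avoiding_route S x q
  then path_weight (- B) x q * \det (id_pad (S :|: [set v in x :: q]))
  else 0.

Lemma path_term_nil S x : x != o -> path_term S x [::] = 0.
Proof. by move=> ne_xo; rewrite /path_term /avoiding_route /= (negPf ne_xo). Qed.

Lemma path_term_target_nil S :
  o \notin S -> path_term S o [::] = \det (id_pad (o |: S)).
Proof.
move=> oS; rewrite /path_term /avoiding_route /= oS eqxx /path_weight big_nil.
by rewrite mul1r; congr (\det (id_pad _)); apply/setP => v; rewrite !inE orbC.
Qed.

Lemma path_term_target_cons S y t : path_term S o (y :: t) = 0.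
Proof.
rewrite /path_term /avoiding_route /=.
case: ifP => // /and3P [/andP [o_yt _] /eqP o_last _].
by move: o_yt; rewrite -o_last mem_last.
Qed.

Lemma path_term_cons S x y t : x \notin S ->
  path_term S x (y :: t) =
  if y \in x |: S then 0 else - B y x * path_term (x |: S) y t.
Proof.
move=> xS; rewrite /path_term avoiding_route_cons //.
have [//|_] /= := boolP (y \in x |: S); case: ifP => _; last by rewrite mulr0.
rewrite path_weight_cons mxE mulrA; congr (_ * \det (id_pad _)).
by apply/setP => v; rewrite !inE orbA (orbC (v \in S)) -orbA.
Qed.

Lemma det_unit_row_path_terms k S x :
  (#|~: S| <= k)%N -> x \notin S -> o \notin S ->
  \det (set_unit_row x o (id_pad S)) =
  \sum_(l < k) \sum_(q : l.-tuple 'I_N) path_term S x q.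
Proof.
elim: k S x => [|k IH] S x le_k xS oS; first by move: le_k; rewrite (cardsC_setU1 xS).
rewrite big_ord_recl big_tuple0.
have [-> | ne_xo] := eqVneq x o.
  rewrite det_unit_row_diag path_term_target_nil // big1 ?addr0 // => l _.
  by apply: big1 => -[[|y t] //= _] _; apply: path_term_target_cons.
rewrite path_term_nil // add0r det_unit_row_expand //.
under [RHS]eq_bigr do rewrite big_tuple_cons.
rewrite exchange_big; apply: eq_bigr => y _ /=.
have [yxS|yxS] := boolP (y \in x |: S).
  by rewrite big1 // => l _; rewrite big1 // => t _; rewrite path_term_cons // yxS.
have le_k' : (#|~: (x |: S)| <= k)%N by rewrite -ltnS -(cardsC_setU1 xS).
have oxS : o \notin x |: S by rewrite !inE negb_or eq_sym ne_xo.
rewrite (IH (x |: S)) // mulr_sumr; apply: eq_bigr => l _.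
by rewrite mulr_sumr; apply: eq_bigr => t _; rewrite path_term_cons // (negPf yxS).
Qed.

End CofactorExpansion.

Lemma det_reindex_inj (R : comNzRingType) n N (g : 'I_n -> 'I_N) (P : 'M[R]_N) :
  n = N -> injective g -> \det (\matrix_(i, j) P (g i) (g j)) = \det P.
Proof.
move=> eq_nN; case: N / eq_nN g P => g P g_inj; pose p := perm g_inj.
have -> : \matrix_(i, j) P (g i) (g j) = row_perm p (col_perm p P).
  by apply/matrixP => i j; rewrite !mxE !permE.
rewrite row_permE col_permE !det_mulmx !det_perm odd_permV mulrCA.
by rewrite -signr_addb addbb expr0 mulr1.
Qed.

Section DeletionByPadding.
Variables (R : comNzRingType) (N : nat) (S : {set 'I_N}).

Definition compl_set_enum (i : 'I_(#|~: S| + #|S|)) : 'I_N :=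
  match split i with inl a => enum_val a | inr b => enum_val b end.

Lemma compl_set_enum_lshift a : compl_set_enum (lshift _ a) = enum_val a.
Proof. by rewrite /compl_set_enum (unsplitK (inl _ a)). Qed.

Lemma compl_set_enum_rshift b : compl_set_enum (rshift _ b) = enum_val b.
Proof. by rewrite /compl_set_enum (unsplitK (inr _ b)). Qed.

Lemma compl_set_enum_inj : injective compl_set_enum.
Proof.
have sep (a : 'I_#|~: S|) (b : 'I_#|S|) : enum_val a != enum_val b.
  by apply: contraTneq (enum_valP a) => ->; rewrite in_setC enum_valP.
move=> i j; case: (split_ordP i) => a ->; case: (split_ordP j) => b ->;
  rewrite ?compl_set_enum_lshift ?compl_set_enum_rshift.
- by move/enum_val_inj ->.
- by move/eqP; rewrite (negPf (sep a b)).
- by move/esym/eqP; rewrite (negPf (sep b a)).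
- by move/enum_val_inj ->.
Qed.

Lemma det_id_pad (B : 'M[R]_N) : \det (id_pad B S) = \det (del_submx B S).
Proof.
have card_split : (#|~: S| + #|S| = N)%N by rewrite addnC cardsC card_ord.
rewrite -(det_reindex_inj _ card_split compl_set_enum_inj).
have -> : \matrix_(i, j) id_pad B S (compl_set_enum i) (compl_set_enum j) =
          block_mx (del_submx B S) 0 0 1%:M.
  apply/matrixP => i j.
  case: (split_ordP i) => a ->; case: (split_ordP j) => b ->;
    rewrite ?block_mxEul ?block_mxEur ?block_mxEdl ?block_mxEdr !mxE
            ?compl_set_enum_lshift ?compl_set_enum_rshift.
  - by have := enum_valP a; have := enum_valP b; rewrite !in_setC => /negPf -> /negPf ->.
  - rewrite enum_valP orbT; case: eqP => // eq_ab.
    by have := enum_valP a; rewrite eq_ab in_setC enum_valP.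
  - rewrite enum_valP; case: eqP => // eq_ab.
    by have := enum_valP b; rewrite -eq_ab in_setC enum_valP.
  - by rewrite enum_valP (inj_eq enum_val_inj).
by rewrite det_lblock det1 mulr1.
Qed.

End DeletionByPadding.

Theorem adj_path_expansion (R : comNzRingType) N (B : 'M[R]_N) (c o : 'I_N) :
  \adj B o c =
  \sum_(l < N) \sum_(q : l.-tuple 'I_N | uniq (c :: q) && (last c q == o))
     path_weight (- B) c q * \det (del_submx B [set v in c :: q]).
Proof.
have le_N : (#|~: (set0 : {set 'I_N})| <= N)%N by rewrite setC0 cardsT card_ord.
rewrite mxE cofactor_unit_row -{1}(id_pad_set0 B).
rewrite (@det_unit_row_path_terms _ _ B o _ _ c le_N) ?inE //; apply: eq_bigr => l _.
rewrite [RHS]big_mkcond; apply: eq_bigr => q _ /=.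
rewrite /path_term /avoiding_route set0U det_id_pad.
have -> : all (fun v => v \notin set0) (c :: q) by apply/allP => v _; rewrite inE.
by rewrite andbT.
Qed.

Lemma del_submx_add_scalar (R : pzRingType) N (M : 'M[R]_N) S (a : R) :
  del_submx (a%:M + M) S = a%:M + del_submx M S.
Proof. by apply/matrixP => i j; rewrite !mxE (inj_eq enum_val_inj). Qed.

Lemma path_weight_opp_laplacian (R : pzRingType) N (A : 'M[R]_N) (s : R) c q :
  uniq (c :: q) -> path_weight (- (s%:M + laplacian A)) c q = path_weight A c q.
Proof.
elim: q c => [|y q IH] c; first by rewrite /path_weight !big_nil.
rewrite cons_uniq inE negb_or => /andP [/andP [ne_cy _] uniq_yq].
rewrite !path_weight_cons IH // !mxE eq_sym (negPf ne_cy) mulr0n mul0r.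
by rewrite add0r sub0r !opprK.
Qed.

Lemma path_weight_eq0 (R : numDomainType) N (A : 'M[R]_N) c q :
  (forall i j, 0 <= A i j) -> ~~ path (Defs.arc A) c q -> path_weight A c q = 0.
Proof.
move=> A_ge0; elim: q c => [//|y q IH] c /=.
rewrite negb_and path_weight_cons => /orP [no_arc|/IH ->]; last by rewrite mulr0.
suff -> : A y c = 0 by rewrite mul0r.
by apply/eqP; move: no_arc; rewrite /Defs.arc lt0r A_ge0 andbT negbK.
Qed.

Theorem theorem4 (R : numFieldType) (N : nat) (A : 'M[R]_N)
    (hA : forall i j, 0 <= A i j) (hloop : forall i, A i i = 0)
    (c o : 'I_N) (hco : c != o) (s : R) :
  \adj (s%:M + laplacian A) o c =
  \sum_(l < N) \sum_(q : l.-tuple 'I_N | is_dpath A c o q)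
     path_weight A c q *
     \det (s%:M + del_submx (laplacian A) [set x in c :: (q : seq 'I_N)]).
Proof.
rewrite adj_path_expansion; apply: eq_bigr => l _.
rewrite big_mkcond [RHS]big_mkcond; apply: eq_bigr => q _.
rewrite /is_dpath del_submx_add_scalar.
have [uniq_cq|_] := boolP (uniq (c :: q)); last by rewrite /= andbF.
case: (last c q == o); rewrite /= ?andbF // andbT path_weight_opp_laplacian //.
by have [//|not_path] := boolP (path _ _ _); rewrite path_weight_eq0 // mul0r.
Qed.
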